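(* Let $(q_n)_{n\geq1}$ be nonnegative reals with $\sum_{n\geq1}q_n=1$ and let $f(x)=\sum_{n\geq1}q_nx^n$ for $x\in[0,1]$. Let $k\geq1$ and let $(p_w)$ be reals in $[0,1]$ indexed by words $w$ over $\{0,1\}$ with $l(w)\leq k-1$. Define functions $f_w$ on $[0,1]$ for words of length at most $k$ by $f_\emptyset=f$ and $$f_{w1}(x)=f_w(p_wx+1-p_w)-f_w(1-p_w),\qquad f_{w0}(x)=f_w((1-p_w)x).$$ Define $\delta_\emptyset=1$, $\delta_{w0}=(1-p_w)\delta_w$, $\delta_{w1}=p_w\delta_w$, and $y_w=\sum_{v:\ l(v)=l(w),\ \#(v)<\#(w)}\delta_v$. Then for every word $w$ of length at most $k$ and every $x\in[0,1]$, $$f'_w(x)=\delta_w\,f'(y_w+\delta_wx).$$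
   Context: Words are finite sequences over $\{0,1\}$; $\emptyset$ is the empty word, $l(w)$ its length, $w0$, $w1$ denote appending a letter. $\#(w)$ is the integer whose binary representation is $w$, first letter most significant. Each $f_w$ is a power series with nonnegative coefficients converging on $[0,1]$; derivatives are the termwise differentiated series, whose value at $x=1$ is taken in $[0,+\infty]$. *)

From HB Require Import structures.
From mathcomp Require Import all_boot all_order all_algebra.
From mathcomp Require Import all_classical all_reals all_analysis.
Set Implicit Arguments. Unset Strict Implicit. Unset Printing Implicit Defensive.
Import Order.TTheory GRing.Theory Num.Theory numFieldNormedType.Exports.
Local Open Scope ring_scope.

(* Words over {0,1} are [seq bool]; [false] = letter 0, [true] = letter 1.
   Appending a letter a to w is [rcons w a]. *)

(* #(w): integer with binary representation w, first letter most significant *)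
Definition wnum (w : seq bool) : nat := foldl (fun acc (b : bool) => acc.*2 + b) 0 w.

Section Words.
Variable R : realType.

Definition pser (c : nat -> R) (x : R) : R := limn (series (fun n => c n * x ^+ n)).

Definition dpser (c : nat -> R) (x : R) : \bar R :=
  (\sum_(0 <= n <oo) ((n%:R * c n * x ^+ n.-1)%:E))%E.

Variables (f : R -> R) (p : seq bool -> R).

(* f_w defined by recursion on the reversed word (last letter first) *)
Fixpoint frev (rw : seq bool) : R -> R :=
  match rw with
  | [::] => f
  | b :: rw' =>
      let u := rev rw' in
      if b then fun x => frev rw' (p u * x + 1 - p u) - frev rw' (1 - p u)
      else fun x => frev rw' ((1 - p u) * x)
  end.
Definition fw (w : seq bool) : R -> R := frev (rev w).

Fixpoint deltarev (rw : seq bool) : R :=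
  match rw with
  | [::] => 1
  | b :: rw' => (if b then p (rev rw') else 1 - p (rev rw')) * deltarev rw'
  end.
Definition delta (w : seq bool) : R := deltarev (rev w).

Definition yw (w : seq bool) : R :=
  \sum_(v : (size w).-tuple bool | (wnum v < wnum w)%N) delta v.

End Words.

From HB Require Import structures.
From mathcomp Require Import all_boot all_order all_algebra.
From mathcomp Require Import all_classical all_reals all_analysis.
From mathcomp Require Import zify ring lra.
Set Implicit Arguments. Unset Strict Implicit. Unset Printing Implicit Defensive.
Import Order.TTheory GRing.Theory Num.Theory numFieldNormedType.Exports.
Local Open Scope ring_scope.

(* By induction on w, f_w is an affine reparametrisation of f:
   f_w(x) = f(y_w + delta_w x) - f(y_w), with 0 <= y_w and y_w + delta_w <= 1;
   appending 0 keeps y_w and appending 1 adds delta_{w0}. Expanding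
   (y + d x)^m - y^m binomially and summing against q gives nonnegative
   coefficients for f_w, whose termwise derivative is d f'(y + d x) by Tonelli.
   Nonnegative coefficients are determined by the values on [0, 1], so any
   other representation of f_w has the same derivative. *)

Lemma wnum_rcons w b : wnum (rcons w b) = ((wnum w).*2 + b)%N.
Proof. by rewrite /wnum foldl_rcons. Qed.

Lemma wnum_rcons_lt u v a b :
  (wnum (rcons u a) < wnum (rcons v b))%N =
  (wnum u < wnum v)%N || (wnum u == wnum v) && (a < b)%N.
Proof. by rewrite !wnum_rcons -!muln2; case: a; case: b; lia. Qed.

Lemma wnum_inj (u v : seq bool) : size u = size v -> wnum u = wnum v -> u = v.
Proof.
elim/last_ind: u v => [|u a IH] v; first by case: v.
case/lastP: v => [|v b]; first by rewrite size_rcons.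
rewrite !size_rcons !wnum_rcons => -[suv] E.
have Eab : a = b by have := congr1 odd E; rewrite !oddD !odd_double; case: a b E => -[].
rewrite -Eab in E *; congr rcons; apply: IH => //.
by move: E; rewrite -!muln2; lia.
Qed.

Lemma big_tuple_rcons (V : nmodType) n (G : n.+1.-tuple bool -> V) :
  \sum_(v : n.+1.-tuple bool) G v =
  \sum_(u : n.-tuple bool) (G [tuple of rcons u false] + G [tuple of rcons u true]).
Proof.
pose h (ub : n.-tuple bool * bool) : n.+1.-tuple bool := [tuple of rcons ub.1 ub.2].
pose g (t : n.+1.-tuple bool) : n.-tuple bool * bool :=
  ([tuple of belast (thead t) (behead t)], last (thead t) (behead t)).
have hK : cancel h g.
  move=> [u b]; rewrite /g /h /=.
  have E : thead [tuple of rcons u b] :: behead [tuple of rcons u b] = rcons u b.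
    exact: (esym (congr1 val (tuple_eta [tuple of rcons u b]))).
  case: u E => [[|a s] sz] /= _; first by congr pair; apply: val_inj.
  rewrite /thead (tnth_nth false) /=; congr pair; last by rewrite last_rcons.
  by apply: val_inj => /=; rewrite belast_rcons.
have gK : cancel g h.
  move=> t; apply: val_inj; rewrite /h /g /= -lastI.
  exact: (esym (congr1 val (tuple_eta t))).
rewrite (reindex h) /=; last by exists g => x _; [exact: hK | exact: gK].
rewrite -(pair_big xpredT xpredT (fun u b => G (h (u, b)))) /=.
by apply: eq_bigr => u _; rewrite big_bool addrC.
Qed.

Section Words.
Variable R : realType.
Variable p : seq bool -> R.

Lemma delta_rcons w b :
  delta p (rcons w b) = (if b then p w else 1 - p w) * delta p w.
Proof. by rewrite /delta rev_rcons /= revK. Qed.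

Lemma delta_rcons_sum w : delta p (rcons w false) + delta p (rcons w true) = delta p w.
Proof. by rewrite !delta_rcons; ring. Qed.

Lemma fw_rcons1 (f : R -> R) w x :
  fw f p (rcons w true) x = fw f p w (p w * x + 1 - p w) - fw f p w (1 - p w).
Proof. by rewrite /fw rev_rcons /= revK. Qed.

Lemma fw_rcons0 (f : R -> R) w x : fw f p (rcons w false) x = fw f p w ((1 - p w) * x).
Proof. by rewrite /fw rev_rcons /= revK. Qed.

Lemma yw_nil : yw p [::] = 0.
Proof. by rewrite /yw big_pred0. Qed.

Lemma yw_rcons w b :
  yw p (rcons w b) = yw p w + (if b then delta p (rcons w false) else 0).
Proof.
have -> : (if b then delta p (rcons w false) else 0) =
    \sum_(u : (size w).-tuple bool)
      (if (wnum u == wnum w) && b then delta p (rcons u false) else 0).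
  rewrite (bigD1 (in_tuple w)) //= eqxx big1 ?addr0 // => u /eqP neq.
  case: ifP => // /andP[/eqP E _]; case: neq; apply: val_inj.
  by apply: wnum_inj; rewrite ?size_tuple.
rewrite [LHS]/yw size_rcons big_mkcond big_tuple_rcons.
rewrite [in RHS]/yw [in RHS]big_mkcond -big_split.
apply: eq_bigr => u _ /=; rewrite !wnum_rcons_lt.
by case: ltngtP; case: b; rewrite /= ?addr0 ?add0r ?delta_rcons_sum.
Qed.

Lemma fw_affine k (f : R -> R) : f 0 = 0 ->
  (forall u, (size u <= k.-1)%N -> 0 <= p u <= 1) ->
  forall w, (size w <= k)%N ->
  [/\ 0 <= yw p w, 0 <= delta p w, yw p w + delta p w <= 1 &
   forall x, fw f p w x = f (yw p w + delta p w * x) - f (yw p w)].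
Proof.
move=> f0 hp; elim/last_ind => [|w b IH] hs.
  by rewrite yw_nil /delta /fw /= f0; split => // x; rewrite add0r mul1r subr0.
have hsw : (size w <= k)%N by move: hs; rewrite size_rcons; lia.
have /andP[p0 p1] : 0 <= p w <= 1 by apply: hp; move: hs; rewrite size_rcons; lia.
have [y0 d0 yd fE] := IH hsw.
rewrite yw_rcons !delta_rcons; case: b {hs}; split; try nra.
- move=> x; rewrite fw_rcons1 !fE.
  have -> : yw p w + delta p w * (p w * x + 1 - p w) =
    yw p w + (1 - p w) * delta p w + p w * delta p w * x by ring.
  by rewrite [delta p w * _]mulrC; ring.
- by move=> x; rewrite fw_rcons0 !fE addr0; congr (f _ - f _); ring.
Qed.

End Words.

Local Open Scope classical_set_scope.

Section PowerSeries.
Variable R : realType.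
Implicit Types (c u : nat -> R) (x t : R).

Lemma cvg_series_eseries u (L : R) : series u @ \oo --> L ->
  (\sum_(n <oo) (u n)%:E = L%:E)%E.
Proof.
move=> uL; have -> : (fun N => \sum_(0 <= n < N) (u n)%:E)%E = EFin \o series u.
  by apply/funext => N; rewrite /= sumEFin.
by rewrite EFin_lim ?(cvg_lim _ uL) //; apply/cvg_ex; exists L.
Qed.

Lemma nneseries_cvg_series u (L : R) : (forall n, 0 <= u n) ->
  (\sum_(n <oo) (u n)%:E = L%:E)%E -> series u @ \oo --> L.
Proof.
move=> u0 uL; have cu : cvgn (series u) by apply: nnseries_is_cvg; rewrite ?uL ?ltry.
suff <- : limn (series u) = L by [].
apply: EFin_inj; rewrite -EFin_lim // -uL.
by apply/congr_lim/funext => N; rewrite /= sumEFin.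
Qed.

Lemma cvg_pser c x : (forall n, 0 <= c n) -> (\sum_(n <oo) (c n)%:E < +oo)%E ->
  0 <= x <= 1 -> series (fun n => c n * x ^+ n) @ \oo --> pser c x.
Proof.
move=> c0 cfin /andP[x0 x1].
suff /cvg_ex[l hl] : cvgn (series (fun n => c n * x ^+ n)) by rewrite /pser (cvg_lim _ hl).
apply: nnseries_is_cvg => [n|]; first by rewrite mulr_ge0 ?exprn_ge0.
apply: le_lt_trans cfin; apply: lee_nneseries => [n _ _|n _].
  by rewrite lee_fin mulr_ge0 ?exprn_ge0.
by rewrite lee_fin -[leRHS]mulr1 ler_wpM2l // exprn_ile1.
Qed.

Lemma pser_at0 c : c 0%N = 0 -> pser c 0 = 0.
Proof.
move=> c00; rewrite /pser (_ : series _ = fun=> 0) ?lim_cst //.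
apply/funext => N; apply: big1 => -[|n] _; first by rewrite c00 mul0r.
by rewrite expr0n mulr0.
Qed.

Lemma nneseries_pow_tail_le c t m : (forall n, 0 <= c n) -> 0 <= t <= 1 ->
  (\sum_(m <= n <oo) (c n * t ^+ n)%:E <= (t ^+ m)%:E * \sum_(m <= n <oo) (c n)%:E)%E.
Proof.
move=> c0 /andP[t0 t1].
rewrite -(@nneseries_addn R (fun n => (c n * t ^+ n)%:E) m); last first.
  by move=> n; rewrite lee_fin mulr_ge0 // exprn_ge0.
rewrite -(@nneseries_addn R (fun n => (c n)%:E) m); last by move=> n; rewrite lee_fin.
rewrite -(@nneseriesZl R (fun n => (c (n + m)%N)%:E) xpredT (t ^+ m) 0); last first.
  by move=> n _; rewrite lee_fin.
apply: lee_nneseries => [n _ _|n _]; first by rewrite lee_fin mulr_ge0 // exprn_ge0.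
rewrite -EFinM lee_fin mulrC exprD ler_wpM2r //.
by rewrite -[leRHS]mul1r ler_wpM2r ?exprn_ge0 ?exprn_ile1.
Qed.

Lemma pseries_remainder_bound c (g : R -> R) t m : (forall n, 0 <= c n) ->
  (forall x, 0 <= x <= 1 -> series (fun n => c n * x ^+ n) @ \oo --> g x) ->
  0 <= t <= 1 ->
  0 <= g t - \sum_(i < m.+1) c i * t ^+ i <= t ^+ m.+1 * g 1.
Proof.
move=> c0 hg t01; have /andP[t0 t1] := t01.
have Et := cvg_series_eseries (hg t t01).
have E1 : (\sum_(n <oo) (c n)%:E = (g 1)%:E)%E.
  rewrite -(cvg_series_eseries (hg 1 ltac:(lra))); apply: eq_eseriesr => n _.
  by rewrite expr1n mulr1.
rewrite (@nneseries_split R (fun n => (c n * t ^+ n)%:E) 0 m.+1) in Et; last first.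
  by move=> n _; rewrite lee_fin mulr_ge0 // exprn_ge0.
rewrite (@nneseries_split R (fun n => (c n)%:E) 0 m.+1) in E1; last first.
  by move=> n _; rewrite lee_fin.
rewrite add0n in Et E1; rewrite sumEFin big_mkord in Et.
have tail_le := nneseries_pow_tail_le m.+1 c0 t01.
have tail0 : (0 <= \sum_(m.+1 <= n <oo) (c n * t ^+ n)%:E)%E.
  by apply: nneseries_ge0 => n _ _; rewrite lee_fin mulr_ge0 // exprn_ge0.
have tail1_0 : (0 <= \sum_(m.+1 <= n <oo) (c n)%:E)%E.
  by apply: nneseries_ge0 => n _ _; rewrite lee_fin.
have tail1_le : (\sum_(m.+1 <= n <oo) (c n)%:E <= (g 1)%:E)%E.
  by rewrite -E1 leeDr // sume_ge0 // => i _; rewrite lee_fin.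
move: Et tail_le tail0 tail1_0 tail1_le.
move: (\sum_(m.+1 <= n <oo) (c n * t ^+ n)%:E)%E (\sum_(m.+1 <= n <oo) (c n)%:E)%E.
move=> [r| |] [r1| |] //=.
rewrite -EFinD -EFinM !lee_fin => -[gtE] tail_le tail0 _ tail1_le; rewrite -gtE.
have tm0 : 0 <= t ^+ m.+1 by rewrite exprn_ge0.
have tail1_scaled := ler_wpM2l tm0 tail1_le.
by apply/andP; split; lra.
Qed.

Lemma le0_of_le_scaled (a G : R) : 0 <= G ->
  (forall t, 0 < t <= 1 -> a <= t * G) -> a <= 0.
Proof.
move=> G0 H; rewrite leNgt; apply/negP => a0.
have s0 : 0 < a + G + 1 by lra.
pose t := a / (a + G + 1).
have t0 : 0 < t by rewrite divr_gt0.
have t1 : t <= 1 by rewrite ler_pdivrMr // mul1r; lra.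
have ht := H t (introT andP (conj t0 t1)).
have e : t * G * (a + G + 1) = a * G by rewrite /t; field; rewrite gt_eqF.
have : a * (a + G + 1) <= t * G * (a + G + 1) by rewrite ler_pM2r.
nra.
Qed.

(* Induction on the degree: once the coefficients agree below m, the m-th
   coefficients differ by at most t * g(1) for every t in ]0, 1]. *)
Lemma pseries_coef_unique c c' (g : R -> R) :
  (forall n, 0 <= c n) -> (forall n, 0 <= c' n) ->
  (forall x, 0 <= x <= 1 -> series (fun n => c n * x ^+ n) @ \oo --> g x) ->
  (forall x, 0 <= x <= 1 -> series (fun n => c' n * x ^+ n) @ \oo --> g x) ->
  c = c'.
Proof.
move=> c0 c'0 hg hg'.
have g1 : 0 <= g 1.
  have := pseries_remainder_bound 0 c0 hg (ltac:(lra) : 0 <= 1 <= 1).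
  rewrite big_ord1 expr0 mulr1 => /andP[h _]; have := c0 0%N; lra.
apply/funext => m; elim/ltn_ind: m => m IH.
have close t : 0 < t <= 1 -> `|c m - c' m| <= t * g 1.
  move=> /andP[t0 t1]; have t01 : 0 <= t <= 1 by lra.
  have := pseries_remainder_bound m c0 hg t01.
  have := pseries_remainder_bound m c'0 hg' t01.
  rewrite !big_ord_recr /= (eq_bigr (fun i : 'I_m => c i * t ^+ i)); last first.
    by move=> i _; rewrite IH.
  set P := \sum_(i < m) c i * t ^+ i; rewrite !exprS.
  have tm : 0 < t ^+ m by rewrite exprn_gt0.
  move=> /andP[h1 h2] /andP[h3 h4]; rewrite -(ler_pM2r tm) -[X in _ * X]gtr0_norm //.
  by rewrite -normrM ler_norml; apply/andP; split; nra.
by apply/eqP; rewrite -subr_eq0 -normr_le0; apply: le0_of_le_scaled g1 close.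
Qed.

End PowerSeries.

Section ShiftCoef.
Variable R : realType.
Variables (y d : R).
Hypotheses (y0 : 0 <= y) (d0 : 0 <= d).

(* coefficient of x^n in (y + d x)^m - y^m *)
Definition shift_coef (m n : nat) : R :=
  if n == 0%N then 0 else 'C(m, n)%:R * y ^+ (m - n) * d ^+ n.

Lemma shift_coef_ge0 m n : 0 <= shift_coef m n.
Proof. by rewrite /shift_coef; case: ifP => // _; rewrite !mulr_ge0 ?exprn_ge0. Qed.

Lemma shift_coef_small m n : (m < n)%N -> shift_coef m n = 0.
Proof. by move=> mn; rewrite /shift_coef bin_small // !mul0r if_same. Qed.

Lemma shift_coef_le m n : shift_coef m n <= (y + d) ^+ m.
Proof.
have yd0 : 0 <= (y + d) ^+ m by rewrite exprn_ge0 ?addr_ge0.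
have [mn|nm] := ltnP m n; first by rewrite shift_coef_small.
rewrite /shift_coef; case: ifP => // _; have nm1 : (n < m.+1)%N by [].
rewrite exprDn (bigD1 (Ordinal nm1)) //= -[leLHS]addr0 lerD //.
  by rewrite -mulrA mulr_natl.
by rewrite sumr_ge0 // => i _; rewrite mulrn_wge0 // mulr_ge0 ?exprn_ge0.
Qed.

Lemma sum_shift_coef m (x : R) :
  \sum_(i < m.+1) shift_coef m i * x ^+ i = (y + d * x) ^+ m - y ^+ m.
Proof.
rewrite exprDn big_ord_recl [in RHS]big_ord_recl /= /shift_coef /= mul0r add0r.
rewrite subn0 expr0 mulr1 bin0 mulr1n addrC addKr.
by apply: eq_bigr => i _; rewrite /bump /= add1n exprMn -mulr_natl; ring.
Qed.

Lemma sum_shift_coef_deriv m (x : R) :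
  \sum_(i < m.+1) i%:R * shift_coef m i * x ^+ i.-1 = d * m%:R * (y + d * x) ^+ m.-1.
Proof.
case: m => [|m]; first by rewrite big_ord1 /= !mul0r mulr0 mul0r.
rewrite big_ord_recl /= !mul0r add0r exprDn mulr_sumr.
apply: eq_bigr => i _; rewrite /bump /= add1n /shift_coef /= subSS.
have e : (i.+1)%:R * 'C(m.+1, i.+1)%:R = m.+1%:R * 'C(m, i)%:R :> R.
  by rewrite -!natrM -mul_bin_diag.
rewrite exprMn exprS -[y ^+ (m - i) * _ *+ _]mulr_natl.
transitivity ((i.+1%:R * 'C(m.+1, i.+1)%:R) * y ^+ (m - i) * (d * d ^+ i) * x ^+ i).
  by ring.
by rewrite e; ring.
Qed.

Lemma nneseries_shift_coef m (x : R) : 0 <= x ->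
  (\sum_(n <oo) (shift_coef m n * x ^+ n)%:E = ((y + d * x) ^+ m - y ^+ m)%:E)%E.
Proof.
move=> x0.
rewrite (@nneseries_split R (fun n => (shift_coef m n * x ^+ n)%:E) 0 m.+1); last first.
  by move=> n _; rewrite lee_fin mulr_ge0 ?shift_coef_ge0 ?exprn_ge0.
rewrite add0n eseries0 ?adde0 ?sumEFin ?big_mkord ?sum_shift_coef //.
by move=> n mn _; rewrite shift_coef_small ?mul0r.
Qed.

Lemma nneseries_shift_coef_deriv m (x : R) : 0 <= x ->
  (\sum_(n <oo) (n%:R * shift_coef m n * x ^+ n.-1)%:E =
   (d * m%:R * (y + d * x) ^+ m.-1)%:E)%E.
Proof.
move=> x0.
rewrite (@nneseries_split R (fun n => (n%:R * shift_coef m n * x ^+ n.-1)%:E) 0 m.+1).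
  rewrite add0n eseries0 ?adde0 ?sumEFin ?big_mkord ?sum_shift_coef_deriv //.
  by move=> n mn _; rewrite shift_coef_small ?mulr0 ?mul0r.
by move=> n _; rewrite lee_fin !mulr_ge0 ?shift_coef_ge0 ?exprn_ge0.
Qed.

End ShiftCoef.

Section Composition.
Variable R : realType.
Variables (q : nat -> R) (y d : R).
Hypotheses (q0 : forall n, 0 <= q n) (qfin : (\sum_(n <oo) (q n)%:E < +oo)%E).
Hypotheses (y0 : 0 <= y) (d0 : 0 <= d) (yd1 : y + d <= 1).

(* coefficients of x |-> pser q (y + d x) - pser q y *)
Definition comp_coef (n : nat) : R :=
  fine (\sum_(m <oo) (q m * shift_coef y d m n)%:E)%E.

Lemma comp_coefE n :
  (comp_coef n)%:E = (\sum_(m <oo) (q m * shift_coef y d m n)%:E)%E.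
Proof.
have nn m : (0 <= (q m * shift_coef y d m n)%:E)%E.
  by rewrite lee_fin mulr_ge0 ?shift_coef_ge0.
rewrite fineK // ge0_fin_numE ?nneseries_ge0 // (le_lt_trans _ qfin) //.
apply: lee_nneseries => // m _; rewrite lee_fin -[leRHS]mulr1 ler_wpM2l //.
by rewrite (le_trans (shift_coef_le y0 d0 m n)) // exprn_ile1 ?addr_ge0.
Qed.

Lemma comp_coef_ge0 n : 0 <= comp_coef n.
Proof.
rewrite -lee_fin comp_coefE nneseries_ge0 // => m _ _.
by rewrite lee_fin mulr_ge0 ?shift_coef_ge0.
Qed.

Lemma nneseries_comp_coef (x : R) : 0 <= x ->
  (\sum_(n <oo) (comp_coef n * x ^+ n)%:E =
   \sum_(m <oo) (q m * ((y + d * x) ^+ m - y ^+ m))%:E)%E.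
Proof.
move=> x0.
transitivity (\sum_(n <oo) \sum_(m <oo) (q m * shift_coef y d m n * x ^+ n)%:E)%E.
  apply: eq_eseriesr => n _; rewrite EFinM comp_coefE muleC -nneseriesZl.
    by apply: eq_eseriesr => m _; rewrite -EFinM mulrC.
  by move=> m _; rewrite lee_fin mulr_ge0 ?shift_coef_ge0.
rewrite nneseries_interchange; last first.
  by move=> m n; rewrite lee_fin !mulr_ge0 ?shift_coef_ge0 ?exprn_ge0.
apply: eq_eseriesr => m _.
rewrite EFinM -(nneseries_shift_coef y0 d0 m x0) -nneseriesZl.
  by apply: eq_eseriesr => n _; rewrite -EFinM mulrA.
by move=> n _; rewrite lee_fin mulr_ge0 ?shift_coef_ge0 ?exprn_ge0.
Qed.

Lemma dpser_comp_coef (x : R) : 0 <= x -> dpser comp_coef x = (d%:E * dpser q (y + d * x))%E.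
Proof.
move=> x0; rewrite /dpser.
transitivity (\sum_(n <oo) \sum_(m <oo)
    (q m * (n%:R * shift_coef y d m n * x ^+ n.-1))%:E)%E.
  apply: eq_eseriesr => n _.
  rewrite (_ : _ * x ^+ n.-1 = n%:R * x ^+ n.-1 * comp_coef n); last by ring.
  rewrite EFinM comp_coefE -nneseriesZl.
    by apply: eq_eseriesr => m _; rewrite -EFinM; congr EFin; ring.
  by move=> m _; rewrite lee_fin mulr_ge0 ?shift_coef_ge0.
rewrite nneseries_interchange; last first.
  by move=> m n; rewrite lee_fin !mulr_ge0 ?shift_coef_ge0 ?exprn_ge0.
rewrite -nneseriesZl; last first.
  by move=> m _; rewrite lee_fin !mulr_ge0 ?ler0n ?exprn_ge0 ?addr_ge0 ?mulr_ge0.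
apply: eq_eseriesr => m _.
rewrite (eq_eseriesr (fun n _ => EFinM _ _)) nneseriesZl; last first.
  by move=> n _; rewrite lee_fin !mulr_ge0 ?shift_coef_ge0 ?exprn_ge0.
rewrite nneseries_shift_coef_deriv //.
by rewrite -!EFinM; congr EFin; ring.
Qed.

Lemma cvg_comp_coef (x : R) : 0 <= x <= 1 ->
  series (fun n => comp_coef n * x ^+ n) @ \oo --> pser q (y + d * x) - pser q y.
Proof.
move=> /andP[x0 x1].
apply: nneseries_cvg_series => [n|]; first by rewrite mulr_ge0 ?comp_coef_ge0 ?exprn_ge0.
have dx : d * x <= d by rewrite -[leRHS]mulr1 ler_wpM2l.
have yx01 : 0 <= y + d * x <= 1 by rewrite addr_ge0 ?mulr_ge0 //= (le_trans _ yd1) ?lerD2l.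
have y01 : 0 <= y <= 1 by rewrite y0 (le_trans _ yd1) ?lerDl.
have /cvg_series_eseries Eyx := cvg_pser q0 qfin yx01.
have /cvg_series_eseries Ey := cvg_pser q0 qfin y01.
have nn m : (0 <= (q m * ((y + d * x) ^+ m - y ^+ m))%:E)%E.
  rewrite EFinM mule_ge0 ?lee_fin // -lee_fin -(nneseries_shift_coef y0 d0 m x0).
  by apply: nneseries_ge0 => n _ _; rewrite lee_fin mulr_ge0 ?shift_coef_ge0 ?exprn_ge0.
have : (\sum_(n <oo) (q n * (y + d * x) ^+ n)%:E = \sum_(n <oo) (q n * y ^+ n)%:E
        + \sum_(n <oo) (q n * ((y + d * x) ^+ n - y ^+ n))%:E)%E.
  rewrite -nneseriesD => [|n _ _|n _ _] //; last by rewrite lee_fin mulr_ge0 ?exprn_ge0.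
  by apply: eq_eseriesr => n _; rewrite -EFinD; congr EFin; ring.
rewrite Eyx Ey nneseries_comp_coef //.
move: (\sum_(n <oo) (q n * ((y + d * x) ^+ n - y ^+ n))%:E)%E => [r| |] //= [->].
by congr EFin; ring.
Qed.

End Composition.

Unset Implicit Arguments.

Theorem lemma2 (R : realType) (q : nat -> R) (k : nat) (p : seq bool -> R) :
  q 0%N = 0 ->
  (forall n, 0 <= q n) ->
  (\sum_(0 <= n <oo) (q n)%:E)%E = 1%E ->
  (1 <= k)%N ->
  (forall w, (size w <= k.-1)%N -> 0 <= p w <= 1) ->
  let f := pser q in
  forall w : seq bool, (size w <= k)%N ->
    (exists c : nat -> R, (forall n, 0 <= c n) /\
       forall x, 0 <= x <= 1 -> series (fun n => c n * x ^+ n) @ \oo --> fw f p w x) /\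
    (forall c : nat -> R, (forall n, 0 <= c n) ->
       (forall x, 0 <= x <= 1 -> series (fun n => c n * x ^+ n) @ \oo --> fw f p w x) ->
       forall x, 0 <= x <= 1 ->
         dpser c x = ((delta p w)%:E * dpser q (yw p w + delta p w * x))%E).
Proof.
move=> q00 q0 q1 _ hp f w hw.
have qfin : (\sum_(n <oo) (q n)%:E < +oo)%E by rewrite q1 ltry.
have [y0 d0 yd1 fwE] := fw_affine (pser_at0 q00) hp hw.
have cvg_c x : 0 <= x <= 1 ->
    series (fun n => comp_coef q (yw p w) (delta p w) n * x ^+ n) @ \oo --> fw f p w x.
  by move=> x01; rewrite fwE; apply: cvg_comp_coef.
split; first by exists (comp_coef q (yw p w) (delta p w)); split => // n; apply: comp_coef_ge0.
move=> c c0 cvg_c' x /andP[x0 _].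
rewrite -(pseries_coef_unique (comp_coef_ge0 q0 qfin y0 d0 yd1) c0 cvg_c cvg_c').
exact: dpser_comp_coef.
Qed.
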